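(* Let $\gamma>0$, $\rho<0$, $C>0$, and let $F$ be a distribution function whose tail quantile function $Q(t)=F^{\leftarrow}(1-1/t)$ satisfies the von Mises condition: there are $A>0$, $t_0>0$ and a function $b$ with $Q(t)=A t^{\gamma}\exp\int_{t_0}^t \frac{b(u)}{u}\,du$ for $t\ge t_0$, and $\bar b(t):=\sup_{x\ge t}|b(x)|\le C t^{\rho}$ for all $t>0$. For integers $k\ge1$ and $\delta\in(0,1)$ define $V(k,\delta)$ as the $(1-\delta/2)$-quantile of $|Z_k-1|$ where $Z_k\sim\mathrm{Gamma}(\text{shape }k,\text{ rate }k)$, $\tilde V(k,\delta)=\sqrt{2\log(2/\delta)/k}+\log(2/\delta)/k$, $R(k,\delta)=\sqrt{3\log(1/\delta)/k}+3\log(1/\delta)/k$, and $$B(k,n,\delta)=\bigl(1+\tilde V(1,\delta/2)\bigr)\,\bar b\Bigl(\frac{n}{(k+1)\bigl(1+R(1,\delta/2)\bigr)}\Bigr).$$ Let $c_1\in(0,1]$ and $c_2\in(0,2]$ be constants such that $V(k,\delta)\ge c_1\bigl(\sqrt{(0\vee\log(c_2/\delta))/k}+\log(c_2/\delta)/k\bigr)$ for all $k\ge1$, $\delta\in(0,1)$. Let $n\ge1$, let $\mathcal K=\{k_1<k_2<\dots<k_M\}\subset\{1,\dots,n\}$, and let $\delta\in(0,1)$ with $\delta\le c_2^2/4$. Assume (i) $B(k_1,n,\delta)\le\gamma V(k_1,\delta)$ and $B(k_M,n,\delta)>\gamma V(k_M,\delta)$; (ii) there is $\beta>1$ with $k_{m+1}/k_m\le\beta$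 for all $m<M$. Define $k^*(\delta,n)=\max\{k\in\mathcal K: B(k,n,\delta)\le\gamma V(k,\delta)\}$ and $$C_2(\rho)=\Bigl(\frac{4}{21}\Bigr)^2\Bigl(\frac{c_1}{\sqrt2\,C}\Bigr)^{2/(1-2\rho)}.$$ Then, provided $n$ is large enough that $n/2\ge \beta^{-1}\Bigl(\frac{C_2(\rho)\gamma^{2/(1-2\rho)}}{\log(4/\delta)}n^{-2\rho/(1-2\rho)}-1\Bigr)$, $$k^*(\delta,n)\ge\beta^{-1}\Bigl(\frac{C_2(\rho)\,\gamma^{2/(1-2\rho)}}{\log(4/\delta)}\,n^{-2\rho/(1-2\rho)}-1\Bigr).$$
   Context: Here $F^{\leftarrow}$ denotes the generalized inverse of $F$. The functions $V$ and $B$ are the variance and bias terms of a non-asymptotic error bound for the Hill estimator $\hat\gamma(k)=\frac1k\sum_{i=1}^k\log(X_{(i)}/X_{(k+1)})$ (with $X_{(1)}\ge\dots\ge X_{(n)}$ the order statistics of an i.i.d. sample from $F$), specialized to the von Mises setting; $k^*(\delta,n)$ is the corresponding ''oracle'' extreme sample size on the grid $\mathcal K$. Assumption (i) is the ''sufficiently wide grid'' condition and (ii) the ''fine enough grid'' condition. *)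

From Stdlib Require Import Reals Lra List.
From Coquelicot Require Import Coquelicot.
Open Scope R_scope.

Definition is_distribution_function (F : R -> R) : Prop :=
  (forall x y, x <= y -> F x <= F y) /\
  (forall x, filterlim F (at_right x) (locally (F x))) /\
  is_lim F m_infty 0 /\ is_lim F p_infty 1.

Definition geninv (F : R -> R) (p : R) : R :=
  real (Glb_Rbar (fun x => p <= F x)).

Definition tailQ (F : R -> R) (t : R) : R := geninv F (1 - / t).

Definition absb_tail (b : R -> R) (t : R) : R -> Prop :=
  fun y => exists x, t <= x /\ y = Rabs (b x).

Definition bbar (b : R -> R) (t : R) : R := real (Lub_Rbar (absb_tail b t)).

Definition gamma_pdf (k : nat) (z : R) : R :=
  if Rle_dec z 0 then 0
  else (INR k) ^ k * z ^ (k - 1) * exp (- INR k * z) / INR (Factorial.fact (k - 1)).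

Definition absdev_cdf (k : nat) (x : R) : R :=
  if Rlt_dec x 0 then 0 else RInt (gamma_pdf k) (1 - x) (1 + x).

Definition Vq (k : nat) (delta : R) : R :=
  real (Glb_Rbar (fun x => 1 - delta / 2 <= absdev_cdf k x)).

Definition Vtilde (k : nat) (delta : R) : R :=
  sqrt (2 * ln (2 / delta) / INR k) + ln (2 / delta) / INR k.

Definition Rfun (k : nat) (delta : R) : R :=
  sqrt (3 * ln (1 / delta) / INR k) + 3 * ln (1 / delta) / INR k.

Definition Bbias (b : R -> R) (k n : nat) (delta : R) : R :=
  (1 + Vtilde 1 (delta / 2)) *
  bbar b (INR n / (INR (k + 1) * (1 + Rfun 1 (delta / 2)))).

(* k*(delta, n) = max { k in K | B(k,n,delta) <= gamma V(k,delta) },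
   where K = { kg 0 < ... < kg (M-1) } *)
Definition kstar (b : R -> R) (gamma : R) (kg : nat -> nat) (M n : nat)
    (delta : R) : nat :=
  list_max (map kg (filter
    (fun m => if Rle_dec (Bbias b (kg m) n delta) (gamma * Vq (kg m) delta)
              then true else false) (seq 0 M))).

Definition C2const (c1 C rho : R) : R :=
  (4 / 21) ^ 2 * Rpower (c1 / (sqrt 2 * C)) (2 / (1 - 2 * rho)).

(* Write l = log(4/δ) and X = C2(ρ) γ^(2/(1-2ρ)) n^(-2ρ/(1-2ρ)) / l.  Both
   1 + Ṽ(1,δ/2) and 1 + R(1,δ/2) are at most (21/4) l, so b̄(t) ≤ C t^ρ gives
   B(k) ≤ (21/4) l C (n / ((k+1) (21/4) l))^ρ, while δ ≤ c2²/4 gives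
   V(k) ≥ c1 sqrt(l / (2(k+1))).  Comparing logarithms, C2(ρ) is chosen so that
   k + 1 ≤ X forces B(k) ≤ γ V(k), i.e. k ≤ k*.  If k* < (X - 1)/β, walking up
   the grid with k_{m+1} ≤ β k_m ≤ β k* < X - 1 would put every grid point,
   k_M included, below k*, contradicting B(k_M) > γ V(k_M). *)
From Stdlib Require Import Reals Lra Lia List.
From Coquelicot Require Import Coquelicot.
Open Scope R_scope.

Lemma Rpower_pos x y : 0 < Rpower x y.
Proof. unfold Rpower. apply exp_pos. Qed.

Ltac Rpos :=
  repeat (first [ apply Rmult_lt_0_compat | apply Rdiv_lt_0_compat
                | apply Rinv_0_lt_compat | apply Rpower_pos | apply sqrt_lt_R0
                | apply pow_lt ]); try lra.

Lemma ln_sqrt x : 0 < x -> ln (sqrt x) = ln x / 2.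
Proof. intros Hx. rewrite <- Rpower_sqrt, ln_Rpower by exact Hx. field. Qed.

Lemma ln_le_inv x y : 0 < x -> 0 < y -> ln x <= ln y -> x <= y.
Proof.
  intros Hx Hy Hle. apply Rnot_lt_le. intros Hlt.
  pose proof (ln_increasing y x Hy Hlt). lra.
Qed.

Lemma sqrt_le_half_add1 z : 0 <= z -> sqrt z <= (z + 1) / 2.
Proof.
  intros Hz. pose proof (sqrt_sqrt z Hz). pose proof (Rle_0_sqr (sqrt z - 1)).
  unfold Rsqr in *. nra.
Qed.

Lemma Rpower_le_antitone x y r : r <= 0 -> 0 < x <= y -> Rpower y r <= Rpower x r.
Proof.
  intros Hr Hxy. rewrite <- (Ropp_involutive r), (Rpower_Ropp y), (Rpower_Ropp x).
  apply Rinv_le_contravar; [apply Rpower_pos|]. apply Rle_Rpower_l; lra.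
Qed.

Lemma bbar_le b t u :
  0 <= u -> Rbar_le (Lub_Rbar (absb_tail b t)) u -> bbar b t <= u.
Proof. unfold bbar. intros Hu. destruct (Lub_Rbar _); simpl; tauto. Qed.

Lemma kg_le_kstar b gamma kg M n delta m :
  (m < M)%nat -> Bbias b (kg m) n delta <= gamma * Vq (kg m) delta ->
  (kg m <= kstar b gamma kg M n delta)%nat.
Proof.
  intros Hm Hsat. unfold kstar.
  apply (proj1 (Forall_forall _ _) (proj1 (list_max_le _ _) (le_n _))).
  apply in_map, filter_In. split.
  - apply in_seq. lia.
  - destruct Rle_dec; [reflexivity | contradiction].
Qed.

Lemma ln_4_div delta : 0 < delta < 1 ->
  ln (4 / delta) = ln 2 + ln (2 / delta) /\ ln 2 < ln (2 / delta).
Proof.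
  intros Hd. split.
  - rewrite <- ln_mult by Rpos. f_equal. field. lra.
  - apply ln_increasing; [lra|]. apply Rlt_div_r; lra.
Qed.

Lemma one_add_Vtilde1_le delta : 0 < delta < 1 ->
  0 <= 1 + Vtilde 1 (delta / 2) <= 21 / 4 * ln (4 / delta).
Proof.
  intros Hd. destruct (ln_4_div delta Hd) as [Hl Hlt]. pose proof ln_lt_2.
  unfold Vtilde. replace (2 / (delta / 2)) with (4 / delta) by (field; lra).
  change (INR 1) with 1. rewrite !Rdiv_1_r.
  pose proof (sqrt_le_half_add1 (2 * ln (4 / delta)) ltac:(lra)).
  pose proof (sqrt_pos (2 * ln (4 / delta))). lra.
Qed.

Lemma one_add_Rfun1_le delta : 0 < delta < 1 ->
  0 < 1 + Rfun 1 (delta / 2) <= 21 / 4 * ln (4 / delta).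
Proof.
  intros Hd. destruct (ln_4_div delta Hd) as [Hl Hlt]. pose proof ln_lt_2.
  unfold Rfun. replace (1 / (delta / 2)) with (2 / delta) by (field; lra).
  change (INR 1) with 1. rewrite !Rdiv_1_r.
  pose proof (sqrt_le_half_add1 (3 * ln (2 / delta)) ltac:(lra)).
  pose proof (sqrt_pos (3 * ln (2 / delta))). lra.
Qed.

Lemma ln_4_div_le delta c : 0 < delta -> 0 < c -> delta <= c ^ 2 / 4 ->
  ln (4 / delta) <= 2 * ln (c / delta).
Proof.
  intros Hd Hc Hdc.
  replace (2 * ln (c / delta)) with (INR 2 * ln (c / delta)) by (simpl; ring).
  rewrite <- ln_pow by Rpos. apply ln_le; [Rpos|].
  replace ((c / delta) ^ 2) with (4 / delta * (c ^ 2 / 4 / delta)) by (field; lra).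
  rewrite <- (Rmult_1_r (4 / delta)) at 1. apply Rmult_le_compat_l; [left; Rpos|].
  apply Rle_div_r; lra.
Qed.

Lemma Vq_ge_sqrt_ln c1 c2 delta k :
  0 < c1 -> 0 < c2 -> 0 < delta < 1 -> delta <= c2 ^ 2 / 4 -> (1 <= k)%nat ->
  c1 * (sqrt (Rmax 0 (ln (c2 / delta)) / INR k) + ln (c2 / delta) / INR k)
    <= Vq k delta ->
  c1 * sqrt (ln (4 / delta) / (2 * (INR k + 1))) <= Vq k delta.
Proof.
  intros Hc1 Hc2 Hd Hdc Hk HV.
  pose proof (ln_4_div_le delta c2 ltac:(lra) Hc2 Hdc) as Hl.
  destruct (ln_4_div delta Hd) as [H4 Hlt]. pose proof ln_lt_2.
  assert (Hk1 : 1 <= INR k) by (apply (le_INR 1); exact Hk).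
  set (L := ln (c2 / delta)) in *.
  rewrite Rmax_right in HV by lra.
  assert (HLk : 0 <= L / INR k) by (apply Rdiv_le_0_compat; lra).
  assert (Hsq : sqrt (ln (4 / delta) / (2 * (INR k + 1))) <= sqrt (L / INR k)).
  { apply sqrt_le_1_alt. apply Rle_trans with (L / (INR k + 1)).
    - replace (ln (4 / delta) / (2 * (INR k + 1))) with (ln (4 / delta) / 2 / (INR k + 1))
        by (field; lra).
      apply Rmult_le_compat_r; [left; Rpos | lra].
    - apply Rmult_le_compat_l; [lra | apply Rinv_le_contravar; lra]. }
  nra.
Qed.

Lemma Bbias_le b C rho delta k n :
  0 < C -> rho <= 0 -> 0 < delta < 1 -> (1 <= n)%nat ->
  (forall t, 0 < t -> Rbar_le (Lub_Rbar (absb_tail b t)) (C * Rpower t rho)) ->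
  Bbias b k n delta <= 21 / 4 * ln (4 / delta) *
    (C * Rpower (INR n / ((INR k + 1) * (21 / 4 * ln (4 / delta)))) rho).
Proof.
  intros HC Hr Hd Hn Hb. unfold Bbias.
  pose proof (one_add_Vtilde1_le delta Hd) as HV.
  pose proof (one_add_Rfun1_le delta Hd) as HR.
  assert (Hn1 : 1 <= INR n) by (apply (le_INR 1); exact Hn).
  assert (Hk : 0 < INR k + 1) by (pose proof (pos_INR k); lra).
  assert (Hl : 0 < ln (4 / delta)) by lra.
  rewrite plus_INR. change (INR 1) with 1.
  set (W := 21 / 4 * ln (4 / delta)) in *.
  set (t := INR n / ((INR k + 1) * (1 + Rfun 1 (delta / 2)))).
  set (t' := INR n / ((INR k + 1) * W)).
  assert (Ht : 0 < t' <= t).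
  { split; [unfold t'; Rpos|]. apply Rmult_le_compat_l; [lra|].
    apply Rinv_le_contravar; [Rpos | apply Rmult_le_compat_l; lra]. }
  assert (Hbb : bbar b t <= C * Rpower t' rho).
  { apply bbar_le; [left; Rpos|]. eapply Rbar_le_trans; [apply Hb; lra|]. simpl.
    apply Rmult_le_compat_l; [lra | apply Rpower_le_antitone; lra]. }
  apply Rle_trans with ((1 + Vtilde 1 (delta / 2)) * (C * Rpower t' rho)).
  - apply Rmult_le_compat_l; lra.
  - apply Rmult_le_compat_r; [left; Rpos | lra].
Qed.

Lemma bias_le_variance_of_le_C2 gamma rho C c1 l K x :
  0 < gamma -> rho < 0 -> 0 < C -> 0 < c1 -> 0 < l -> 0 < K -> 0 < x ->
  K <= C2const c1 C rho * Rpower gamma (2 / (1 - 2 * rho)) / l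
         * Rpower x (- 2 * rho / (1 - 2 * rho)) ->
  21 / 4 * l * (C * Rpower (x / (K * (21 / 4 * l))) rho)
    <= gamma * (c1 * sqrt (l / (2 * K))).
Proof.
  intros Hg Hr HC Hc1 Hl HK Hx HKX.
  apply ln_le_inv; [Rpos | Rpos |].
  apply ln_le in HKX; [|exact HK]. unfold C2const in HKX.
  repeat rewrite ?ln_mult, ?ln_div, ?ln_Rpower, ?ln_sqrt, ?ln_pow in * by Rpos.
  change (INR 2) with 2 in HKX.
  (* 1/2 - rho inverts the exponent 2/(1 - 2 rho); what is left is rho ln(21/4) <= 0. *)
  assert (H21 : ln 4 < ln 21) by (apply ln_increasing; lra).
  match type of HKX with ln K <= ?Y =>
    assert (E : (1 / 2 - rho) * Y =
                (1 - 2 * rho) * (ln 4 - ln 21) + ln c1 - ln 2 / 2 - ln C + ln gamma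
                - (1 / 2 - rho) * ln l - rho * ln x) by (field; lra);
    assert (HsY : (1 / 2 - rho) * ln K <= (1 / 2 - rho) * Y)
      by (apply Rmult_le_compat_l; lra)
  end.
  assert (rho * (ln 21 - ln 4) <= 0) by nra.
  lra.
Qed.

Lemma Bbias_le_gamma_Vq gamma rho C b c1 c2 n k delta :
  0 < gamma -> rho < 0 -> 0 < C ->
  (forall t, 0 < t -> Rbar_le (Lub_Rbar (absb_tail b t)) (C * Rpower t rho)) ->
  0 < c1 -> 0 < c2 -> 0 < delta < 1 -> delta <= c2 ^ 2 / 4 ->
  (1 <= n)%nat -> (1 <= k)%nat ->
  c1 * (sqrt (Rmax 0 (ln (c2 / delta)) / INR k) + ln (c2 / delta) / INR k)
    <= Vq k delta ->
  INR k + 1 <= C2const c1 C rho * Rpower gamma (2 / (1 - 2 * rho)) / ln (4 / delta)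
                 * Rpower (INR n) (- 2 * rho / (1 - 2 * rho)) ->
  Bbias b k n delta <= gamma * Vq k delta.
Proof.
  intros Hg Hr HC Hb Hc1 Hc2 Hd Hdc Hn Hk HV HX.
  assert (Hl : 0 < ln (4 / delta)).
  { destruct (ln_4_div delta Hd). pose proof ln_lt_2. lra. }
  assert (Hn0 : 0 < INR n) by (apply lt_0_INR; lia).
  assert (Hk0 : 0 < INR k + 1) by (pose proof (pos_INR k); lra).
  apply Rle_trans with (1 := Bbias_le b C rho delta k n HC ltac:(lra) Hd Hn Hb).
  apply Rle_trans with (gamma * (c1 * sqrt (ln (4 / delta) / (2 * (INR k + 1))))).
  - apply bias_le_variance_of_le_C2; assumption.
  - apply Rmult_le_compat_l; [lra|]. apply (Vq_ge_sqrt_ln c1 c2); assumption.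
Qed.

Lemma grid_below_threshold (kg : nat -> nat) (M ks : nat) (X beta : R) :
  1 <= beta ->
  (forall m, (m + 1 < M)%nat -> INR (kg (m + 1)%nat) <= beta * INR (kg m)) ->
  (forall m, (m < M)%nat -> INR (kg m) + 1 <= X -> (kg m <= ks)%nat) ->
  (kg 0 <= ks)%nat -> beta * INR ks < X - 1 ->
  forall m, (m < M)%nat -> INR (kg m) + 1 <= X.
Proof.
  intros Hbeta Hstep Hbelow H0 Hks.
  pose proof (pos_INR ks).
  induction m as [|m IH]; intros Hm.
  - apply le_INR in H0. nra.
  - assert (Hkm := le_INR _ _ (Hbelow m ltac:(lia) (IH ltac:(lia)))).
    assert (Hs := Hstep m ltac:(lia)). rewrite Nat.add_1_r in Hs. nra.
Qed.

Theorem proposition4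
  (gamma rho C : R) (F : R -> R) (A t0 : R) (b : R -> R)
  (c1 c2 : R) (n M : nat) (kg : nat -> nat) (delta beta : R) :
  0 < gamma -> rho < 0 -> 0 < C ->
  is_distribution_function F ->
  0 < A -> 0 < t0 ->
  (forall t, t0 <= t ->
     ex_RInt (fun u => b u / u) t0 t /\
     tailQ F t = A * Rpower t gamma * exp (RInt (fun u => b u / u) t0 t)) ->
  (forall t, 0 < t -> Rbar_le (Lub_Rbar (absb_tail b t)) (C * Rpower t rho)) ->
  0 < c1 <= 1 -> 0 < c2 <= 2 ->
  (forall (k : nat) (d : R), (1 <= k)%nat -> 0 < d < 1 ->
     c1 * (sqrt (Rmax 0 (ln (c2 / d)) / INR k) + ln (c2 / d) / INR k)
       <= Vq k d) ->
  (1 <= n)%nat -> (1 <= M)%nat ->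
  (forall m, (m + 1 < M)%nat -> (kg m < kg (m + 1))%nat) ->
  (forall m, (m < M)%nat -> (1 <= kg m)%nat /\ (kg m <= n)%nat) ->
  0 < delta < 1 -> delta <= c2 ^ 2 / 4 ->
  Bbias b (kg 0%nat) n delta <= gamma * Vq (kg 0%nat) delta ->
  Bbias b (kg (M - 1)%nat) n delta > gamma * Vq (kg (M - 1)%nat) delta ->
  1 < beta ->
  (forall m, (m + 1 < M)%nat -> INR (kg (m + 1)%nat) / INR (kg m) <= beta) ->
  INR n / 2 >= / beta *
     (C2const c1 C rho * Rpower gamma (2 / (1 - 2 * rho)) / ln (4 / delta)
        * Rpower (INR n) (- 2 * rho / (1 - 2 * rho)) - 1) ->
  INR (kstar b gamma kg M n delta) >= / beta *
     (C2const c1 C rho * Rpower gamma (2 / (1 - 2 * rho)) / ln (4 / delta)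
        * Rpower (INR n) (- 2 * rho / (1 - 2 * rho)) - 1).
Proof.
  intros Hg Hr HC _ _ _ _ Hb [Hc1 _] [Hc2 _] HV Hn HM _ Hrange Hd Hdc H0 HMl
    Hbeta Hratio _.
  set (X := C2const c1 C rho * Rpower gamma (2 / (1 - 2 * rho)) / ln (4 / delta)
              * Rpower (INR n) (- 2 * rho / (1 - 2 * rho))).
  set (ks := kstar b gamma kg M n delta).
  assert (Hsat : forall m, (m < M)%nat -> INR (kg m) + 1 <= X ->
                 Bbias b (kg m) n delta <= gamma * Vq (kg m) delta).
  { intros m Hm HmX. destruct (Hrange m Hm) as [Hk _].
    apply (Bbias_le_gamma_Vq gamma rho C b c1 c2); auto. }
  assert (Hstep : forall m, (m + 1 < M)%nat -> INR (kg (m + 1)%nat) <= beta * INR (kg m)).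
  { intros m Hm. destruct (Hrange m ltac:(lia)) as [Hk _].
    apply Rle_div_l; [apply lt_0_INR; lia | exact (Hratio m Hm)]. }
  apply Rnot_lt_ge. intros Hlt.
  assert (Hks : beta * INR ks < X - 1).
  { apply (Rmult_lt_compat_l beta) in Hlt; [|lra].
    rewrite <- Rmult_assoc, Rinv_r, Rmult_1_l in Hlt by lra. exact Hlt. }
  pose proof (grid_below_threshold kg M ks X beta ltac:(lra) Hstep
    (fun m Hm HmX => kg_le_kstar b gamma kg M n delta m Hm (Hsat m Hm HmX))
    (kg_le_kstar b gamma kg M n delta 0 ltac:(lia) H0) Hks) as Hall.
  apply (Rlt_not_le _ _ HMl), Hsat, Hall; lia.
Qed.
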